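(* Let $X$ be a list of $m$ inputs and $Y$ a disjoint list of $n$ inputs, with positive sizes; let $sum_x$ and $sum_y$ denote the sums of the sizes of the inputs of $X$ and of $Y$ respectively, and let $q$ be the reducer capacity, where $sum_x>q$ and $sum_y>q$. Then every X2Y mapping schema for $X$ and $Y$ with capacity $q$ has communication cost at least $\frac{2\cdot sum_x\cdot sum_y}{q}$ and uses at least $\frac{2\cdot sum_x\cdot sum_y}{q^2}$ reducers.
   Context: An X2Y mapping schema for lists $X$ and $Y$ with capacity $q$ is an assignment of the inputs of $X\cup Y$ to a collection of reducers (each input may go to several reducers) such that every reducer receives inputs of total size at most $q$ and for every $x\in X$ and $y\in Y$ there is a reducer receiving both. The communication cost is the sum over reducers of the total size of the inputs assigned to it. *)

From HB Require Import structures.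
From mathcomp Require Import all_boot all_order all_algebra.
Unset Printing Implicit Defensive.
Import Order.TTheory GRing.Theory Num.Theory.
Local Open Scope ring_scope.

(* X = inputs 'I_m with sizes wx, Y = inputs 'I_n with sizes wy (disjoint by
   construction). *)
Record schema (m n : nat) := Schema {
  nred : nat;
  sx : 'I_nred -> {set 'I_m};
  sy : 'I_nred -> {set 'I_n} }.

Section S.
Variables (R : realFieldType) (m n : nat) (wx : 'I_m -> R) (wy : 'I_n -> R).

Definition load (S : schema m n) (r : 'I_(nred m n S)) : R :=
  \sum_(i in sx m n S r) wx i + \sum_(j in sy m n S r) wy j.

Definition is_X2Y_schema (q : R) (S : schema m n) : Prop :=
  (forall r, load S r <= q) /\
  (forall (i : 'I_m) (j : 'I_n), exists r : 'I_(nred m n S), (i \in sx m n S r) && (j \in sy m n S r)).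

Definition comm_cost (S : schema m n) : R := \sum_(r < nred m n S) load S r.

Definition num_reducers (S : schema m n) : nat :=
  #|[set r : 'I_(nred m n S) | (sx m n S r != set0) || (sy m n S r != set0)]|.
End S.

From HB Require Import structures.
From mathcomp Require Import all_boot all_order all_algebra.
From mathcomp Require Import ring lra.
Import Order.TTheory GRing.Theory Num.Theory.
Set Implicit Arguments.
Unset Strict Implicit.
Unset Printing Implicit Defensive.
Local Open Scope ring_scope.

(* Every pair (i, j) of X * Y meets in some reducer r, so the product
   sum_x * sum_y of the total weights is at most sum_r x_r y_r, where x_r and
   y_r are the X- and Y-loads of r.  A reducer with x_r + y_r <= q has
   4 x_r y_r <= (x_r + y_r)^2 <= (x_r + y_r) q <= q^2; summing over the
   reducers bounds 4 sum_x sum_y by q times the communication cost and by q^2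
   times the number of used reducers, twice the stated bounds. *)

Lemma four_mul_le_add_mul (R : realDomainType) (a b q : R) :
  0 <= a -> 0 <= b -> a + b <= q -> 4 * (a * b) <= (a + b) * q.
Proof.
move=> a0 b0 abq.
have sq_le : (a + b) * (a + b) <= (a + b) * q by rewrite ler_wpM2l ?addr_ge0.
have sq_ge0 : 0 <= (a - b) * (a - b) by rewrite -expr2 sqr_ge0.
nra.
Qed.

Lemma four_mul_le_sqr (R : realDomainType) (a b q : R) :
  0 <= a -> 0 <= b -> a + b <= q -> 4 * (a * b) <= q ^+ 2.
Proof.
move=> a0 b0 abq; apply: (le_trans (four_mul_le_add_mul a0 b0 abq)).
by rewrite expr2 ler_wpM2r // (le_trans _ abq) ?addr_ge0.
Qed.

Lemma cover_sum_mul_le (R : numDomainType) (I J K : finType)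
    (w : I -> R) (v : J -> R) (A : K -> {set I}) (B : K -> {set J}) :
  (forall i, 0 <= w i) -> (forall j, 0 <= v j) ->
  (forall i j, exists r, (i \in A r) && (j \in B r)) ->
  (\sum_i w i) * (\sum_j v j) <=
    \sum_r (\sum_(i in A r) w i) * (\sum_(j in B r) v j).
Proof.
move=> w0 v0 cover.
pose F r i j := if (i \in A r) && (j \in B r) then w i * v j else 0.
have F0 r i j : 0 <= F r i j by rewrite /F; case: ifP => // _; exact: mulr_ge0.
have per_reducer r : (\sum_(i in A r) w i) * (\sum_(j in B r) v j) =
                     \sum_i \sum_j F r i j.
  rewrite big_distrlr /= big_mkcond; apply: eq_bigr => i _; rewrite /F.
  by case: (i \in A r) => /=; [rewrite big_mkcond | rewrite big1].
rewrite (eq_bigr _ (fun r _ => per_reducer r)) exchange_big /=.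
under [X in _ <= X]eq_bigr => i _ do rewrite exchange_big /=.
rewrite big_distrlr /=; apply: ler_sum => i _; apply: ler_sum => j _.
have [r rij] := cover i j.
by rewrite (bigD1 r) //= {1}/F rij lerDl sumr_ge0.
Qed.

Section Schema.
Variables (R : realFieldType) (m n : nat) (wx : 'I_m -> R) (wy : 'I_n -> R).
Hypotheses (wx_ge0 : forall i, 0 <= wx i) (wy_ge0 : forall j, 0 <= wy j).
Variables (q : R) (S : schema m n).
Hypothesis S_X2Y : is_X2Y_schema R m n wx wy q S.

Definition xload (r : 'I_(nred m n S)) : R := \sum_(i in sx m n S r) wx i.
Definition yload (r : 'I_(nred m n S)) : R := \sum_(j in sy m n S r) wy j.

Lemma xload_ge0 r : 0 <= xload r.
Proof. exact: sumr_ge0. Qed.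

Lemma yload_ge0 r : 0 <= yload r.
Proof. exact: sumr_ge0. Qed.

Lemma xload_add_yload_le r : xload r + yload r <= q.
Proof. exact: S_X2Y.1. Qed.

Lemma comm_cost_ge0 : 0 <= comm_cost R m n wx wy S.
Proof. by apply: sumr_ge0 => r _; rewrite addr_ge0 ?xload_ge0 ?yload_ge0. Qed.

Lemma sum_weights_mul_le_loads :
  (\sum_i wx i) * (\sum_j wy j) <= \sum_r xload r * yload r.
Proof. exact: cover_sum_mul_le S_X2Y.2. Qed.

Lemma four_loads_le_comm_cost :
  4 * \sum_r xload r * yload r <= comm_cost R m n wx wy S * q.
Proof.
rewrite mulr_sumr mulr_suml; apply: ler_sum => r _.
exact: four_mul_le_add_mul (xload_ge0 r) (yload_ge0 r) (xload_add_yload_le r).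
Qed.

Lemma four_loads_le_num_reducers :
  4 * \sum_r xload r * yload r <= (num_reducers m n S)%:R * q ^+ 2.
Proof.
set used := [set r | (sx m n S r != set0) || (sy m n S r != set0)].
have -> : \sum_r xload r * yload r = \sum_(r in used) xload r * yload r.
  rewrite (bigID (mem used)) /= addrC big1 ?add0r // => r.
  rewrite inE negb_or !negbK => /andP[/eqP sx0 _].
  by rewrite /xload sx0 big_set0 mul0r.
rewrite mulr_sumr /num_reducers -/used mulr_natl -sumr_const; apply: ler_sum => r _.
exact: four_mul_le_sqr (xload_ge0 r) (yload_ge0 r) (xload_add_yload_le r).
Qed.

End Schema.

Theorem theorem14 (R : realFieldType) (m n : nat)
    (wx : 'I_m -> R) (wy : 'I_n -> R) (q : R)
    (hwx : forall i, 0 < wx i) (hwy : forall j, 0 < wy j)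
    (hsx : q < \sum_(i < m) wx i) (hsy : q < \sum_(j < n) wy j)
    (S : schema m n) (hS : is_X2Y_schema R m n wx wy q S) :
  2 * (\sum_(i < m) wx i) * (\sum_(j < n) wy j) / q <= comm_cost R m n wx wy S /\
  2 * (\sum_(i < m) wx i) * (\sum_(j < n) wy j) / q ^+ 2 <= (num_reducers m n S)%:R.
Proof.
have wx_ge0 i : 0 <= wx i by exact: ltW.
have wy_ge0 j : 0 <= wy j by exact: ltW.
have prod_ge0 : 0 <= (\sum_i wx i) * (\sum_j wy j) by rewrite mulr_ge0 ?sumr_ge0.
have prod_le := sum_weights_mul_le_loads wx_ge0 wy_ge0 hS.
have cost_bound := four_loads_le_comm_cost wx_ge0 wy_ge0 hS.
have reducers_bound := four_loads_le_num_reducers wx_ge0 wy_ge0 hS.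
have cost_ge0 := comm_cost_ge0 wx_ge0 wy_ge0 S.
have [q_gt0 | q_le0] := ltP 0 q.
  by split; rewrite ler_pdivrMr ?exprn_gt0 //; nra.
(* For q <= 0, cost_bound forces sum_x * sum_y = 0 and both sides vanish. *)
have -> : 2 * (\sum_i wx i) * (\sum_j wy j) = 0 by nra.
by rewrite !(mul0r, mulr0) cost_ge0 ler0n.
Qed.
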